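(* In the setting described in the context, assume the bounded-flux assumption holds. Then there exist positive constants $C_3$, $C_4$ and $C_5$, independent of $|I|$, $|\bar J_n|$, $|K|$, $T_{\mathrm{renorm}}$ and $M$, such that if $T_{\mathrm{renorm}}\ge C_3$, then for every $j\in\bar J_n$, $k\in K$ and $m\in[M]$, \[ \left| w^{j\to k}(T^2_m)-\bar w^{j\to k}_{m+1}\right|\le C_4\,e^{-C_5|\bar J_n|T_{\mathrm{renorm}}}. \] Therefore $w^{j\to k}(T^2_m)\to\bar w^{j\to k}_{m+1}$ as $T_{\mathrm{renorm}}\to\infty$.
   Context: Deterministic mass-action chemical reaction network. Let $I$ and $K$ be finite sets with $|K|\ge2$, $n\in\{1,\dots,|I|\}$, $J_n$ the set of $n$-element subsets of $I$. Input concentrations $x^i\ge0$, $i\in I$, are prescribed functions of time; flux $\Phi^j(t):=\prod_{i\in j}x^i(t)$. Positive constants: $a_0,a_1,a_2,b_1,b_2,s_0,h_0,\eta,\theta,\rho$, durations $T_{\mathrm{sel}},T_{\mathrm{renorm}},T_{\mathrm{learn}}$; $M\ge1$; $[M]=\{1,\dots,M\}$. Selection phase: $x^i$ continuous on $[0,T_{\mathrm{sel}}]$; $f:[0,\infty)\to[0,\infty)$ continuous, $f\equiv0$ on $[0,\theta]$, increasing on $(\theta,\theta+\rho)$, $f\equiv\|f\|_\infty$ on $[\theta+\rho,\infty)$. $\bar J_n$ (assumed nonempty) is the set of $j\in J_n$ such that $\Phi^j>\theta$ on some $[t_0,t_1]\subset[0,T_{\mathrm{sel}}]$ with $t_0<t_1$.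 $T^0_1:=T_{\mathrm{sel}}+T_{\mathrm{renorm}}$. For $j\in\bar J_n$: $w^j(0)=0$, $\dot w^j=f(\Phi^j)$ on $[0,T_{\mathrm{sel}}]$, $\dot w^j=a_0(b_1-b_2w^j)$ on $[T_{\mathrm{sel}},T^0_1]$, and $w^j$ is constant afterwards. Write $x^j(t):=w^j(T^0_1)\Phi^j(t)$ for $t\ge T^0_1$. Learning phase: times $T^0_m<T^1_m<T^2_m=T^0_{m+1}$ ($m\in[M]$), $T^1_m-T^0_m=T_{\mathrm{learn}}$, $T^2_m-T^1_m=T_{\mathrm{renorm}}$; $x^i$ continuous on each $[T^0_m,T^1_m]$. Training sample $o_m$ has true class $k^\star_m\in K$ (write $o_m\in k$ iff $k^\star_m=k$); $M^k:=\#\{m:o_m\in k\}>0$; $d_k:=\eta M/M^k$, $c_k:=\eta M/(M^k(|K|-1))$. State variables $x^k$ ($k\in K$), $h^{j\to k},w^{j\to k}$ ($j\in\bar J_n$, $k\in K$) with $x^k(T^0_1)=0$, $h^{j\to k}(T^0_1)=h_0$, $w^{j\to k}(T^0_1)=\frac{b_1}{b_2|\bar J_n|}$. On $[T^0_m,T^1_m]$: $w^{j\to k}$ constant, $\dot x^k=a_1\sum_{j\in\bar J_n}x^j(t)w^{j\to k}(T^0_m)$, $\dot h^{j\to k^\star_m}=d_{k^\star_m}(x^j(t)+s_0)h^{j\to k^\star_m}$, and for $k\ne k^\star_m$, $\dot h^{j\to k}=c_k(s_0-x^j(t))h^{j\to k}$. On $[T^1_m,T^2_m]$: $h^{j\to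 k}$ constant, $\dot x^k=-a_2x^k$, $\dot w^{j\to k}=b_1h^{j\to k}(T^1_m)-b_2w^{j\to k}\sum_{j'\in\bar J_n}h^{j'\to k}(T^1_m)$. Gains: $g^{j\to k}_m:=\big(w^j(T^0_1)\int_{T^0_m}^{T^1_m}\Phi^j+s_0T_{\mathrm{learn}}\big)\frac{M}{M^k}$ if $o_m\in k$, and $g^{j\to k}_m:=\big(-w^j(T^0_1)\int_{T^0_m}^{T^1_m}\Phi^j+s_0T_{\mathrm{learn}}\big)\frac{M}{M^{k'}}\frac{1}{|K|-1}$ if $o_m\in k'\ne k$; $G^{j\to k}_m:=\sum_{m'=1}^m g^{j\to k}_{m'}$. EWA weights: $\bar w^{j\to k}_1:=\frac{b_1}{b_2|\bar J_n|}$ and $\bar w^{j\to k}_{m+1}:=\frac{b_1}{b_2}\frac{\exp(\eta G^{j\to k}_m)}{\sum_{j'\in\bar J_n}\exp(\eta G^{j'\to k}_m)}$ for $m\ge1$. Bounded-flux assumption: there is $\alpha>0$ independent of $M$ with $\sup_{j\in\bar J_n,\,t\in[T^0_1,T^2_M]}\Phi^j(t)\le\alpha$, and $\delta:=s_0-2\frac{b_1}{b_2}\alpha>0$. *)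

From HB Require Import structures.
From mathcomp Require Import all_boot all_order all_algebra.
From mathcomp Require Import all_classical all_reals all_analysis.
Set Implicit Arguments. Unset Strict Implicit. Unset Printing Implicit Defensive.
Import Order.TTheory GRing.Theory Num.Theory.
Import numFieldNormedType.Exports.
Local Open Scope classical_set_scope.
Local Open Scope ring_scope.

Section CRN.
Context {R : realType} {I K : finType}.

Definition Phi (x : I -> R -> R) (j : {set I}) (t : R) : R := \prod_(i in j) x i t.

Definition Jbar (x : I -> R -> R) (n : nat) (theta Tsel : R) : {set {set I}} :=
  [set j : {set I} | (#|j| == n) &&
     `[< exists t0 t1 : R, [/\ 0 <= t0, t0 < t1, t1 <= Tsel &
            forall t, t0 <= t <= t1 -> theta < Phi x j t] >]].

(* phase times, for m >= 1 *)
Definition T0 (Tsel Tlearn Tren : R) (m : nat) : R :=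
  Tsel + Tren + (m.-1)%:R * (Tlearn + Tren).
Definition T1 (Tsel Tlearn Tren : R) (m : nat) : R := T0 Tsel Tlearn Tren m + Tlearn.
Definition T2 (Tsel Tlearn Tren : R) (m : nat) : R := T1 Tsel Tlearn Tren m + Tren.

(* M^k = #{ m in [M] : o_m in k } ; kstar m is the true class of sample o_m *)
Definition class_count (kstar : nat -> K) (M : nat) (k : K) : nat :=
  (\sum_(1 <= m < M.+1) (kstar m == k))%N.

Definition drate (eta : R) (kstar : nat -> K) (M : nat) (k : K) : R :=
  eta * M%:R / (class_count kstar M k)%:R.
Definition crate (eta : R) (kstar : nat -> K) (M : nat) (k : K) : R :=
  eta * M%:R / ((class_count kstar M k)%:R * (#|K|.-1)%:R).

(* gain g^{j->k}_m ; wsel j is the selection-phase weight w^j(.) *)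
Definition gain (x : I -> R -> R) (wsel : {set I} -> R -> R) (s0 Tsel Tlearn Tren : R)
    (kstar : nat -> K) (M : nat) (m : nat) (j : {set I}) (k : K) : R :=
  let W := wsel j (T0 Tsel Tlearn Tren 1) in
  let In := \int[lebesgue_measure]_(t in `[T0 Tsel Tlearn Tren m, T1 Tsel Tlearn Tren m])
              Phi x j t in
  if kstar m == k then
    (W * In + s0 * Tlearn) * (M%:R / (class_count kstar M k)%:R)
  else
    (- (W * In) + s0 * Tlearn) * (M%:R / (class_count kstar M (kstar m))%:R)
      * ((#|K|.-1)%:R)^-1.

Definition cgain (x : I -> R -> R) (wsel : {set I} -> R -> R) (s0 Tsel Tlearn Tren : R)
    (kstar : nat -> K) (M : nat) (m : nat) (j : {set I}) (k : K) : R :=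
  \sum_(1 <= m' < m.+1) gain x wsel s0 Tsel Tlearn Tren kstar M m' j k.

Definition ewa (x : I -> R -> R) (wsel : {set I} -> R -> R) (Jb : {set {set I}})
    (b1 b2 eta s0 Tsel Tlearn Tren : R) (kstar : nat -> K) (M : nat)
    (m : nat) (j : {set I}) (k : K) : R :=
  if (m <= 1)%N then b1 / (b2 * #|Jb|%:R)
  else b1 / b2 * (expR (eta * cgain x wsel s0 Tsel Tlearn Tren kstar M m.-1 j k)
         / \sum_(j' in Jb) expR (eta * cgain x wsel s0 Tsel Tlearn Tren kstar M m.-1 j' k)).

End CRN.

From HB Require Import structures.
From mathcomp Require Import all_boot all_order all_algebra.
From mathcomp Require Import all_classical all_reals all_analysis.
From mathcomp Require Import ring lra.
Set Implicit Arguments. Unset Strict Implicit. Unset Printing Implicit Defensive.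
Import Order.TTheory GRing.Theory Num.Theory.
Import numFieldNormedType.Exports.
Local Open Scope classical_set_scope.
Local Open Scope ring_scope.

(* Between two learning phases the weight [w^{j->k}] follows the relaxation
   ODE [w' = b1 h^{j->k} - b2 w sum_j' h^{j'->k}] with frozen [h], so it
   approaches the normalised value [b1 h^{j->k} / (b2 sum_j' h^{j'->k})] at rate
   [b2 sum_j' h^{j'->k}]. During each learning phase [h^{j->k}] solves a linear
   ODE, whence [h^{j->k} = h0 exp (eta G^{j->k}_m)] and that normalised value is
   exactly the EWA weight. The gains are nonnegative: the selection weights are
   at most [2 b1/b2] once [Tren >= C3], and then the margin [delta > 0] dominates
   the flux term. Hence [sum_j' h^{j'->k} >= h0 |Jbar|], and since [w] stays in
   [[0, b1/b2]] the error is at most [b1/b2 exp (- b2 h0 |Jbar| Tren)]. *)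

Section RealAnalysis.
Context {R : realType}.
Implicit Types (a b c d s A : R) (u g dg P : R -> R).

Lemma continuous_within_segmentW u a b c d : a <= c -> d <= b ->
  {within `[a, b], continuous u} -> {within `[c, d], continuous u}.
Proof.
move=> ac db; apply: continuous_subspaceW => t /=; rewrite !in_itv /=.
by case/andP=> ct td; rewrite (le_trans ac ct) (le_trans td db).
Qed.

Lemma continuous_within_affine (A : set R) u c s :
  {within A, continuous u} -> {within A, continuous (fun t => c * u t + s * t)}.
Proof.
move=> cu t.
apply: (@continuousD R R^o (subspace A) (fun t : subspace A => c * u t)
  (fun t : subspace A => s * t)).
  apply: (@continuousM R (subspace A) (fun=> c) (from_subspace A u) t).
    exact: cst_continuous.
  exact: cu.
by apply: (continuous_subspaceT (fun z => @mulrl_continuous R s z)).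
Qed.

Lemma linear_ode_expR u g dg a b : a < b ->
  {within `[a, b], continuous u} -> {within `[a, b], continuous g} ->
  (forall t, a < t < b -> is_derive t 1 g (dg t)) ->
  (forall t, a < t < b -> is_derive t 1 u (dg t * u t)) ->
  u b = u a * expR (g b - g a).
Proof.
move=> ab cu cg dg_g du.
pose v t := u t * expR (- g t).
have [t|t|c _] := @MVT R v (fun _ => 0) a b ab.
- rewrite in_itv /= => tab.
  have dE : is_derive t 1 (expR \o (fun y => - g y)) (expR (- g t) * - dg t).
    by apply: is_derive1_comp; apply: is_deriveN; exact: dg_g.
  have duE := is_deriveM (du t tab) dE.
  apply: (is_derive_eq duE).
  by rewrite /GRing.scale /=; ring.
- apply: (@continuousM R (subspace `[a, b]) u (expR \o (fun y => - g y)) t).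
    exact: cu.
  apply: continuous_comp; last exact: continuous_expR.
  by apply: continuousN; exact: cg.
rewrite mul0r => /eqP; rewrite subr_eq0 /v => /eqP vab.
have -> : u b = u b * expR (- g b) * expR (g b).
  by rewrite -mulrA -expRD addNr expR0 mulr1.
by rewrite vab -mulrA -expRD addrC.
Qed.

Lemma relaxation_ode_expR u a b c A : a < b ->
  {within `[a, b], continuous u} ->
  (forall t, a < t < b -> is_derive t 1 u (c * (A - u t))) ->
  u b - A = (u a - A) * expR (- c * (b - a)).
Proof.
move=> ab cu du.
have cuA : {within `[a, b], continuous (fun t => u t - A)}.
  move=> t; apply: (@continuousB R R^o (subspace `[a, b]) (from_subspace `[a, b] u)
    (fun=> A) t); [exact: cu | exact: cst_continuous].
have cg : {within `[a, b], continuous ( *%R (- c))}.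
  by apply: continuous_subspaceT => t; exact: mulrl_continuous.
have dg t : a < t < b -> is_derive t 1 ( *%R (- c)) (- c).
  move=> _; apply: (is_derive_eq (is_deriveZ (- c) (@is_derive_id _ _ t 1))).
  by rewrite /GRing.scale /= mulr1.
have duA t : a < t < b -> is_derive t 1 (fun t => u t - A) (- c * (u t - A)).
  move=> tab; apply: (is_derive_eq (is_deriveB (du t tab) (is_derive_cst A t 1))).
  by ring.
rewrite (linear_ode_expR ab cuA cg dg duA).
by congr (_ * expR _); ring.
Qed.

Lemma growth_ode_Rintegral u P a b c s : a < b ->
  {within `[a, b], continuous P} -> {within `[a, b], continuous u} ->
  (forall t, a < t < b -> is_derive t 1 u ((c * P t + s) * u t)) ->
  u b = u a * expR (c * \int[lebesgue_measure]_(t in `[a, b]) P t + s * (b - a)).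
Proof.
move=> ab cP cu du.
pose IP t := \int[lebesgue_measure]_(y in `[a, t]) P y.
have iP : lebesgue_measure.-integrable `[a, b] (EFin \o P).
  by apply: continuous_compact_integrable => //; exact: segment_compact.
have [cPo _ _] := (continuous_within_itvP P ab).1 cP.
have dIP t : a < t < b -> is_derive t 1 IP (P t).
  move=> /[dup] tab /andP[a_t t_b].
  have cPt : {for t, continuous P} by apply: cPo; rewrite in_itv /= tab.
  have [IPd IPE] := continuous_FTC1_closed t_b iP a_t cPt.
  by apply: DeriveDef => //; rewrite -derive1E.
have cIP : {within `[a, b], continuous IP}.
  exact: parameterized_integral_continuous (ltW ab) iP.
have dg t : a < t < b -> is_derive t 1 (fun y => c * IP y + s * y) (c * P t + s).
  move=> tab; have dgE := is_deriveD (is_deriveZ c (dIP t tab))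
    (is_deriveZ s (@is_derive_id _ _ t 1)).
  by apply: (is_derive_eq dgE); rewrite /GRing.scale /= mulr1.
rewrite (linear_ode_expR ab cu (continuous_within_affine (c := c) (s := s) cIP) dg du).
have IPa : IP a = 0 by rewrite /IP set_itv1 Rintegral_set1.
by rewrite IPa /IP; congr (_ * expR _); ring.
Qed.

Lemma Rintegral_segment_bounds P a b m : a <= b ->
  {within `[a, b], continuous P} -> (forall t, a <= t <= b -> 0 <= P t <= m) ->
  0 <= \int[lebesgue_measure]_(t in `[a, b]) P t <= m * (b - a).
Proof.
move=> ab cP Pb.
have m0 : 0 <= m by have /andP[] := Pb a ltac:(by rewrite lexx ab); exact: le_trans.
apply/andP; split.
  by apply: Rintegral_ge0 => t; rewrite /= in_itv /= => /Pb /andP[].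
have iP : lebesgue_measure.-integrable `[a, b] (EFin \o P).
  by apply: continuous_compact_integrable => //; exact: segment_compact.
have im : lebesgue_measure.-integrable `[a, b] (EFin \o (fun=> m)).
  apply: continuous_compact_integrable; first exact: segment_compact.
  by apply: continuous_subspaceT => z; exact: cst_continuous.
apply: le_trans (le_Rintegral _ iP im _) _ => //.
  by move=> t; rewrite /= in_itv /= => /Pb /andP[].
rewrite Rintegral_cst //= lebesgue_measure_itv /= lte_fin.
case: ifP => _; first by rewrite -EFinD.
by rewrite /= mulr0 mulr_ge0 ?subr_ge0.
Qed.

Lemma continuous_eventually_constant_bounded (f : R -> R) c : 0 <= c ->
  {within `[0, +oo[, continuous f} -> (forall t, c <= t -> f t = f c) ->
  exists Fm, forall t, 0 <= t -> f t <= Fm.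
Proof.
move=> c0 cf fc.
have cf' : {within `[0, c], continuous f}.
  by apply: continuous_subspaceW cf => t; rewrite /= !in_itv /= => /andP[->].
have [tm] := EVT_max c0 cf'; rewrite in_itv /= => /andP[tm0 tmc] fmax.
exists (f tm) => t t0; have [tc|ct] := leP t c.
  by apply: fmax; rewrite in_itv /= t0 tc.
by rewrite fc ?(ltW ct) //; apply: fmax; rewrite in_itv /= c0 lexx.
Qed.

Lemma expRN_le_inv (y : R) : 0 < y -> expR (- y) <= y^-1.
Proof.
move=> y0; rewrite expRN lef_pV2 ?posrE ?expR_gt0 //.
by apply: le_trans (expR_ge1Dx y); rewrite lerDr.
Qed.

Lemma ler_term_sum {T : finType} (A : {set T}) (F : T -> R) i :
  i \in A -> (forall j, j \in A -> 0 <= F j) -> F i <= \sum_(j in A) F j.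
Proof.
move=> iA F0; rewrite (bigD1 i) //= lerDl sumr_ge0 // => j /andP[jA _].
exact: F0.
Qed.

Lemma softmax_bounds {T : finType} (A : {set T}) (F : T -> R) i : i \in A ->
  0 <= expR (F i) / \sum_(j in A) expR (F j) <= 1.
Proof.
move=> iA; have F_le : expR (F i) <= \sum_(j in A) expR (F j).
  by apply: ler_term_sum => // j _; exact: ltW (expR_gt0 _).
have S_gt0 := lt_le_trans (expR_gt0 _) F_le.
by rewrite divr_ge0 ?(ltW S_gt0) ?(ltW (expR_gt0 _)) //= ler_pdivrMr // mul1r.
Qed.

Lemma relaxed_value_bounds lo hi A w0 w1 e : lo <= A <= hi -> lo <= w0 <= hi ->
  0 <= e <= 1 -> w1 - A = (w0 - A) * e -> lo <= w1 <= hi.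
Proof.
move=> /andP[loA Ahi] /andP[low0 w0hi] /andP[e0 e1] w1E.
have -> : w1 = A * (1 - e) + w0 * e by rewrite -[w1](subrK A) w1E; ring.
have e1' : 0 <= 1 - e by rewrite subr_ge0.
have [h1 h2] := (ler_wpM2r e1' loA, ler_wpM2r e1' Ahi).
have [h3 h4] := (ler_wpM2r e0 low0, ler_wpM2r e0 w0hi).
by apply/andP; split; lra.
Qed.

Lemma selection_weight_bounds u g (a0 b1 b2 Fm Tsel Tren : R) :
  0 < a0 -> 0 < b1 -> 0 < b2 -> 0 < Tsel -> 0 < Tren ->
  Fm * Tsel <= a0 * b1 * Tren ->
  u 0 = 0 -> {within `[0, Tsel + Tren], continuous u} ->
  (forall t, 0 < t < Tsel -> is_derive t 1 u (g t)) ->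
  (forall t, 0 < t < Tsel -> 0 <= g t <= Fm) ->
  (forall t, Tsel < t < Tsel + Tren -> is_derive t 1 u (a0 * (b1 - b2 * u t))) ->
  0 <= u (Tsel + Tren) <= 2 * (b1 / b2).
Proof.
move=> a0_gt0 b1_gt0 b2_gt0 Tsel_gt0 Tren_gt0 FmT u0 cu du_sel g_bnd du_ren.
have TselT : Tsel < Tsel + Tren by rewrite ltrDl.
have [c c_in uTsel] : exists2 c, c \in `]0, Tsel[ & u Tsel - u 0 = g c * (Tsel - 0).
  exact: MVT Tsel_gt0 du_sel (continuous_within_segmentW (lexx 0) (ltW TselT) cu).
have /andP[uTsel0 uTselF] : 0 <= u Tsel <= Fm * Tsel.
  move: c_in uTsel; rewrite in_itv u0 !subr0 /= => /g_bnd /andP[g0 gF] ->.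
  by rewrite mulr_ge0 ?ler_wpM2r //= ltW.
set q := b1 / b2.
have du_q t : Tsel < t < Tsel + Tren -> is_derive t 1 u (a0 * b2 * (q - u t)).
  move=> /du_ren du_t; apply: (is_derive_eq du_t).
  by rewrite /q; field; rewrite gt_eqF.
have := relaxation_ode_expR TselT
  (continuous_within_segmentW (ltW Tsel_gt0) (lexx _) cu) du_q.
rewrite addrAC subrr add0r mulNr; set e := expR _ => uE.
have e_gt0 : 0 < e := expR_gt0 _.
have e_le1 : e <= 1 by rewrite expR_le1 oppr_le0 ltW // !mulr_gt0.
have eF : u Tsel * e <= q.
  have y_gt0 : 0 < a0 * b2 * Tren by rewrite !mulr_gt0.
  have qE : q * (a0 * b2 * Tren) = a0 * b1 * Tren by rewrite /q; field; rewrite gt_eqF.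
  apply: le_trans (ler_pM uTsel0 (ltW e_gt0) uTselF (expRN_le_inv y_gt0)) _.
  by rewrite ler_pdivrMr // qE.
have qe : q * e <= q by rewrite ger_pMr ?divr_gt0.
have uTe : 0 <= u Tsel * e by rewrite mulr_ge0 // ltW.
by apply/andP; split; nra.
Qed.

End RealAnalysis.

Section Flux.
Context {R : realType} {I : finType}.
Variables (x : I -> R -> R) (j : {set I}).

Lemma Phi_ge0 t : (forall i, 0 <= x i t) -> 0 <= Phi x j t.
Proof. by move=> x0; apply: prodr_ge0. Qed.

Lemma Phi_continuous_within (A : set R) :
  (forall i, {within A, continuous (x i)}) -> {within A, continuous (Phi x j)}.
Proof. by move=> cx; apply: continuous_big => [|i _]; [exact: mul_continuous | exact: cx]. Qed.

End Flux.

Section PhaseTimes.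
Context {R : realType} {Tsel Tlearn Tren : R}.
Local Notation tau0 := (T0 Tsel Tlearn Tren).
Local Notation tau1 := (T1 Tsel Tlearn Tren).
Local Notation tau2 := (T2 Tsel Tlearn Tren).

Lemma T0_1 : tau0 1 = Tsel + Tren.
Proof. by rewrite /T0 mul0r addr0. Qed.

Lemma T0S m : (0 < m)%N -> tau0 m.+1 = tau2 m.
Proof. by case: m => // m _; rewrite /T2 /T1 /T0 /= -[m.+1%:R]natr1; ring. Qed.

Lemma T1_sub_T0 m : tau1 m - tau0 m = Tlearn.
Proof. by rewrite /T1 addrC addKr. Qed.

Lemma T2_sub_T1 m : tau2 m - tau1 m = Tren.
Proof. by rewrite /T2 addrC addKr. Qed.

Hypotheses (Tlearn_ge0 : 0 <= Tlearn) (Tren_ge0 : 0 <= Tren).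

Lemma T0_le_T1 m : tau0 m <= tau1 m.
Proof. by rewrite /T1 lerDl. Qed.

Lemma T1_le_T2 m : tau1 m <= tau2 m.
Proof. by rewrite /T2 lerDl. Qed.

Lemma T0_homo : {homo tau0 : m n / (m <= n)%N >-> m <= n}.
Proof.
move=> m n mn; rewrite /T0 lerD2l ler_wpM2r ?addr_ge0 // ler_nat.
by rewrite -!subn1 leq_sub2r.
Qed.

Lemma T2_homo : {homo tau2 : m n / (m <= n)%N >-> m <= n}.
Proof. by move=> m n mn; rewrite /T2 /T1 !lerD2r T0_homo. Qed.

End PhaseTimes.

Lemma ewa_bounds {R : realType} {I K : finType} (x : I -> R -> R) (wsel : {set I} -> R -> R)
    (Jb : {set {set I}}) (b1 b2 eta s0 Tsel Tlearn Tren : R) (kstar : nat -> K) M m j k :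
  0 < b1 -> 0 < b2 -> j \in Jb ->
  0 <= ewa x wsel Jb b1 b2 eta s0 Tsel Tlearn Tren kstar M m j k <= b1 / b2.
Proof.
move=> b1_gt0 b2_gt0 jJ; have q_gt0 : 0 < b1 / b2 by rewrite divr_gt0.
rewrite /ewa; case: ifP => _.
  have Jb1 : 1 <= #|Jb|%:R :> R by rewrite ler1n card_gt0; apply/set0Pn; exists j.
  have Jb_gt0 : 0 < #|Jb|%:R :> R := lt_le_trans ltr01 Jb1.
  by rewrite invfM mulrA divr_ge0 ?(ltW q_gt0) ?ler0n //= ler_pdivrMr // ler_peMr // ltW.
set G := cgain x wsel s0 Tsel Tlearn Tren kstar M m.-1.
have /andP[p0 p1] := softmax_bounds (fun j' => eta * G j' k) jJ.
by rewrite mulr_ge0 ?(ltW q_gt0) //= ler_piMr ?(ltW q_gt0).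
Qed.

Section LearningPhase.
Context {R : realType} {I K : finType}.
Variables (x : I -> R -> R) (wsel : {set I} -> R -> R) (kstar : nat -> K).
Variables (h w : {set I} -> K -> R -> R) (Jb : {set {set I}}) (M : nat).
Variables (b1 b2 s0 h0 eta Tsel Tlearn Tren alpha : R).

Local Notation tau0 := (T0 Tsel Tlearn Tren).
Local Notation tau1 := (T1 Tsel Tlearn Tren).
Local Notation tau2 := (T2 Tsel Tlearn Tren).
Local Notation W j := (wsel j (tau0 1%N)).
Local Notation g := (gain x wsel s0 Tsel Tlearn Tren kstar M).
Local Notation G := (cgain x wsel s0 Tsel Tlearn Tren kstar M).
Local Notation hsum k t := (\sum_(j' in Jb) h j' k t).
Local Notation wbar := (ewa x wsel Jb b1 b2 eta s0 Tsel Tlearn Tren kstar M).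

Hypotheses (b1_gt0 : 0 < b1) (b2_gt0 : 0 < b2) (s0_gt0 : 0 < s0) (h0_gt0 : 0 < h0).
Hypothesis eta_gt0 : 0 < eta.
Hypotheses (Tsel_gt0 : 0 < Tsel) (Tlearn_gt0 : 0 < Tlearn) (Tren_gt0 : 0 < Tren).
Hypothesis x_ge0 : forall i t, 0 <= t -> 0 <= x i t.
Hypothesis x_cont : forall i m, (1 <= m <= M)%N ->
  {within `[tau0 m, tau1 m], continuous (x i)}.
Hypothesis flux_le : forall j t, j \in Jb -> tau0 1%N <= t <= tau2 M -> Phi x j t <= alpha.
Hypothesis W_bounds : forall j, j \in Jb -> 0 <= W j <= 2 * (b1 / b2).
Hypothesis margin_gt0 : 0 < s0 - 2 * (b1 / b2) * alpha.
Hypothesis h_init : forall j k, j \in Jb -> h j k (tau0 1%N) = h0.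
Hypothesis w_init : forall j k, j \in Jb -> w j k (tau0 1%N) = b1 / (b2 * #|Jb|%:R).
Hypothesis h_cont : forall j k, j \in Jb -> {within `[tau0 1%N, tau2 M], continuous (h j k)}.
Hypothesis w_cont : forall j k, j \in Jb -> {within `[tau0 1%N, tau2 M], continuous (w j k)}.
Hypothesis w_learn : forall m, (1 <= m <= M)%N -> forall j k t, j \in Jb ->
  tau0 m <= t <= tau1 m -> w j k t = w j k (tau0 m).
Hypothesis h_learn_true : forall m, (1 <= m <= M)%N -> forall j t, j \in Jb ->
  tau0 m < t < tau1 m -> is_derive t 1 (h j (kstar m))
    (drate eta kstar M (kstar m) * (W j * Phi x j t + s0) * h j (kstar m) t).
Hypothesis h_learn_other : forall m, (1 <= m <= M)%N -> forall j k t, j \in Jb ->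
  k != kstar m -> tau0 m < t < tau1 m -> is_derive t 1 (h j k)
    (crate eta kstar M (kstar m) * (s0 - W j * Phi x j t) * h j k t).
Hypothesis h_renorm : forall m, (1 <= m <= M)%N -> forall j k t, j \in Jb ->
  tau1 m <= t <= tau2 m -> h j k t = h j k (tau1 m).
Hypothesis w_renorm : forall m, (1 <= m <= M)%N -> forall j k t, j \in Jb ->
  tau1 m < t < tau2 m -> is_derive t 1 (w j k)
    (b1 * h j k (tau1 m) - b2 * w j k t * hsum k (tau1 m)).

Let Tlearn_ge0 := ltW Tlearn_gt0.
Let Tren_ge0 := ltW Tren_gt0.

Let run_window m : (1 <= m <= M)%N -> tau0 1%N <= tau0 m /\ tau2 m <= tau2 M.
Proof. by case/andP=> m1 mM; split; [exact: T0_homo | exact: T2_homo]. Qed.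

Lemma flux_bounds m j t : (1 <= m <= M)%N -> j \in Jb -> tau0 m <= t <= tau1 m ->
  0 <= Phi x j t <= alpha.
Proof.
move=> mM jJ /andP[t0 t1]; have [w0 w2] := run_window mM.
have t_ge : tau0 1%N <= t := le_trans w0 t0.
rewrite Phi_ge0 => [|i]; last by apply: x_ge0; rewrite (le_trans _ t_ge) // T0_1 addr_ge0 ?ltW.
by rewrite flux_le // t_ge (le_trans t1) // (le_trans (T1_le_T2 Tren_ge0 _)).
Qed.

Lemma flux_integral_bounds m j : (1 <= m <= M)%N -> j \in Jb ->
  0 <= \int[lebesgue_measure]_(t in `[tau0 m, tau1 m]) Phi x j t <= alpha * Tlearn.
Proof.
move=> mM jJ; have := Rintegral_segment_bounds (T0_le_T1 Tlearn_ge0 m)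
  (Phi_continuous_within (fun i => @x_cont i m mM)) (fun t => flux_bounds mM jJ).
by rewrite T1_sub_T0.
Qed.

Lemma gain_ge0 m j k : (1 <= m <= M)%N -> j \in Jb -> 0 <= g m j k.
Proof.
move=> mM jJ; have /andP[W0 W2] := W_bounds jJ.
have /andP[In0 Ina] := flux_integral_bounds mM jJ.
rewrite /gain /=; set In := \int[lebesgue_measure]_(t in _) _ in In0 Ina *.
case: eqP => _.
  by rewrite !mulr_ge0 ?addr_ge0 ?divr_ge0 ?mulr_ge0 ?(ltW s0_gt0).
have WIn : W j * In <= 2 * (b1 / b2) * (alpha * Tlearn) := ler_pM W0 In0 W2 Ina.
have marg := mulr_gt0 margin_gt0 Tlearn_gt0.
by rewrite !mulr_ge0 ?invr_ge0 ?divr_ge0 //; lra.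
Qed.

Lemma cgain_ge0 m j k : (m <= M)%N -> j \in Jb -> 0 <= G m j k.
Proof.
move=> mM jJ; rewrite /cgain big_nat_cond sumr_ge0 // => i /andP[/andP[i1 im] _].
by rewrite gain_ge0 // i1 (leq_trans (ltnSE im) mM).
Qed.

Lemma h_learn_step m j k : (1 <= m <= M)%N -> j \in Jb ->
  h j k (tau1 m) = h j k (tau0 m) * expR (eta * g m j k).
Proof.
move=> mM jJ; have [w0 w2] := run_window mM.
have lt01 : tau0 m < tau1 m by rewrite /T1 ltrDl.
have cP := Phi_continuous_within (j := j) (fun i => @x_cont i m mM).
have ch k' := continuous_within_segmentW w0 (le_trans (T1_le_T2 Tren_ge0 m) w2)
  (@h_cont j k' jJ).
rewrite /gain /=; case: eqP => [<-|/eqP km].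
  pose r := drate eta kstar M (kstar m).
  have dh t : tau0 m < t < tau1 m ->
      is_derive t 1 (h j (kstar m)) ((r * W j * Phi x j t + r * s0) * h j (kstar m) t).
    by move=> tm; apply: (is_derive_eq (h_learn_true mM jJ tm)); rewrite /r; ring.
  rewrite (growth_ode_Rintegral lt01 cP (ch _) dh) T1_sub_T0 /r /drate.
  by congr (_ * expR _); ring.
pose r := crate eta kstar M (kstar m).
have dh t : tau0 m < t < tau1 m ->
    is_derive t 1 (h j k) ((- (r * W j) * Phi x j t + r * s0) * h j k t).
  move=> tm; rewrite eq_sym in km.
  by apply: (is_derive_eq (h_learn_other mM jJ km tm)); rewrite /r; ring.
rewrite (growth_ode_Rintegral lt01 cP (ch _) dh) T1_sub_T0 /r /crate invfM.
by congr (_ * expR _); ring.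
Qed.

Lemma h_closed_form m j k : (1 <= m <= M)%N -> j \in Jb ->
  h j k (tau1 m) = h0 * expR (eta * G m j k).
Proof.
move=> + jJ; elim: m => // m IH mM.
rewrite h_learn_step // /cgain big_nat_recr //= mulrDr expRD mulrA; congr (_ * _).
case: m IH mM => [_ _|m IH mM]; first by rewrite h_init // big_geq // mulr0 expR0 mulr1.
have mM' : (1 <= m.+1 <= M)%N by rewrite /= ltnW //; case/andP: mM.
rewrite T0S // (h_renorm mM' k jJ); first exact: IH.
by rewrite lexx andbT T1_le_T2.
Qed.

Lemma hsum_closed_form m k : (1 <= m <= M)%N ->
  hsum k (tau1 m) = h0 * \sum_(j in Jb) expR (eta * G m j k).
Proof. by move=> mM; rewrite big_distrr; apply: eq_bigr => j jJ; exact: h_closed_form. Qed.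

Lemma hsum_ge m k : (1 <= m <= M)%N -> h0 * #|Jb|%:R <= hsum k (tau1 m).
Proof.
move=> mM; rewrite hsum_closed_form // ler_wpM2l ?(ltW h0_gt0) //.
rewrite -sum1_card natr_sum ler_sum // => j jJ.
by rewrite -expR0 ler_expR mulr_ge0 ?(ltW eta_gt0) ?cgain_ge0 //; case/andP: mM.
Qed.

Let wbar_bounds m k j : j \in Jb -> 0 <= wbar m j k <= b1 / b2.
Proof. exact: ewa_bounds. Qed.

Lemma wbar_succE m j k : (1 <= m <= M)%N -> j \in Jb ->
  wbar m.+1 j k = b1 * h j k (tau1 m) / (b2 * hsum k (tau1 m)).
Proof.
move=> /[dup] mM /andP[m1 _] jJ.
have S_gt0 : 0 < \sum_(j' in Jb) expR (eta * G m j' k).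
  apply: lt_le_trans (expR_gt0 (eta * G m j k)) (ler_term_sum jJ _) => j' _.
  exact: ltW (expR_gt0 _).
rewrite /ewa ltnNge m1 /= hsum_closed_form // h_closed_form //.
by field; rewrite !gt_eqF.
Qed.

Lemma w_renorm_step m j k : (1 <= m <= M)%N -> j \in Jb ->
  w j k (tau2 m) - wbar m.+1 j k =
  (w j k (tau0 m) - wbar m.+1 j k) * expR (- (b2 * hsum k (tau1 m)) * Tren).
Proof.
move=> mM jJ; have [w0 w2] := run_window mM.
have S_gt0 : 0 < hsum k (tau1 m).
  apply: lt_le_trans (hsum_ge k mM); rewrite mulr_gt0 ?ltr0n ?card_gt0 //.
  by apply/set0Pn; exists j.
have lt12 : tau1 m < tau2 m by rewrite /T2 ltrDl.
have cw := continuous_within_segmentW (le_trans w0 (T0_le_T1 Tlearn_ge0 m)) w2 (@w_cont j k jJ).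
have dw t : tau1 m < t < tau2 m ->
    is_derive t 1 (w j k) (b2 * hsum k (tau1 m) * (wbar m.+1 j k - w j k t)).
  move=> tm; apply: (is_derive_eq (w_renorm mM k jJ tm)).
  by rewrite wbar_succE //; field; rewrite !gt_eqF.
rewrite (relaxation_ode_expR lt12 cw dw) T2_sub_T1 (w_learn mM k (t := tau1 m) jJ) //.
by rewrite T0_le_T1 ?lexx.
Qed.

Lemma w_bounds m j k : (1 <= m <= M)%N -> j \in Jb -> 0 <= w j k (tau0 m) <= b1 / b2.
Proof.
move=> + jJ; elim: m => // -[_ _|m IH mM].
  (* the initial weight [b1 / (b2 * #|Jb|)] is [wbar 1] by computation *)
  by rewrite w_init //; exact: (wbar_bounds 1 k jJ).
have mM' : (1 <= m.+1 <= M)%N by case/andP: mM => _ /ltnW.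
have S_ge0 : 0 <= hsum k (tau1 m.+1).
  exact: le_trans (mulr_ge0 (ltW h0_gt0) (ler0n _ _)) (hsum_ge k mM').
rewrite T0S //; apply: relaxed_value_bounds (wbar_bounds m.+2 k jJ) (IH mM') _
  (w_renorm_step k mM' jJ).
by rewrite (ltW (expR_gt0 _)) /= expR_le1 mulNr oppr_le0 !mulr_ge0 ?(ltW b2_gt0).
Qed.

Lemma learned_weight_error m j k : (1 <= m <= M)%N -> j \in Jb ->
  `|w j k (tau2 m) - wbar m.+1 j k| <= b1 / b2 * expR (- (b2 * h0) * #|Jb|%:R * Tren).
Proof.
move=> mM jJ; rewrite w_renorm_step // normrM (gtr0_norm (expR_gt0 _)).
apply: ler_pM => //.
  have /andP[w0 wq] := w_bounds k mM jJ; have /andP[a0 aq] := wbar_bounds m.+1 k jJ.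
  by rewrite ler_norml; apply/andP; split; lra.
rewrite ler_expR !mulNr lerN2 ler_pM2r // -mulrA ler_pM2l //.
exact: hsum_ge.
Qed.

End LearningPhase.

Theorem proposition9 (R : realType)
  (a0 a1 a2 b1 b2 s0 h0 eta theta rho Tsel Tlearn alpha : R) (f : R -> R) :
  0 < a0 -> 0 < a1 -> 0 < a2 -> 0 < b1 -> 0 < b2 -> 0 < s0 -> 0 < h0 ->
  0 < eta -> 0 < theta -> 0 < rho -> 0 < Tsel -> 0 < Tlearn -> 0 < alpha ->
  (* delta := s0 - 2 (b1/b2) alpha > 0 *)
  0 < s0 - 2 * (b1 / b2) * alpha ->
  (* f : [0,oo) -> [0,oo) continuous, 0 on [0,theta], increasing on
     (theta, theta+rho), constant (= its sup norm) on [theta+rho, oo) *)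
  {within `[0, +oo[, continuous f} ->
  (forall t, 0 <= t -> 0 <= f t) ->
  (forall t, 0 <= t <= theta -> f t = 0) ->
  {in `]theta, theta + rho[ &, {homo f : s t / s < t}} ->
  (forall t, theta + rho <= t -> f t = f (theta + rho)) ->
  exists C3 C4 C5 : R, [/\ 0 < C3, 0 < C4, 0 < C5 &
  forall (I K : finType) (n M : nat) (Tren : R) (x : I -> R -> R) (kstar : nat -> K)
    (wsel : {set I} -> R -> R) (xk : K -> R -> R) (h w : {set I} -> K -> R -> R),
  let Jb := Jbar x n theta Tsel in
  let tau0 := T0 Tsel Tlearn Tren in
  let tau1 := T1 Tsel Tlearn Tren in
  let tau2 := T2 Tsel Tlearn Tren in
  let xj := fun (j : {set I}) (t : R) => wsel j (tau0 1%N) * Phi x j t in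
  (2 <= #|K|)%N -> (1 <= n <= #|I|)%N -> (1 <= M)%N -> 0 < Tren ->
  (* inputs *)
  (forall i t, 0 <= t -> 0 <= x i t) ->
  (forall i, {within `[0, Tsel], continuous (x i)}) ->
  (forall i m, (1 <= m <= M)%N -> {within `[tau0 m, tau1 m], continuous (x i)}) ->
  (* every class occurs among the samples *)
  (forall k, (0 < class_count kstar M k)%N) ->
  (0 < #|Jb|)%N ->
  (* bounded-flux assumption *)
  (forall j t, j \in Jb -> tau0 1%N <= t <= tau2 M -> Phi x j t <= alpha) ->
  (* selection + renormalisation phase for w^j *)
  (forall j, j \in Jb ->
     [/\ wsel j 0 = 0,
         {within `[0, tau0 1%N], continuous (wsel j)},
         (forall t, 0 < t < Tsel -> is_derive t 1 (wsel j) (f (Phi x j t))),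
         (forall t, Tsel < t < tau0 1%N ->
            is_derive t 1 (wsel j) (a0 * (b1 - b2 * wsel j t))) &
         (forall t, tau0 1%N <= t -> wsel j t = wsel j (tau0 1%N))]) ->
  (* learning phase: initial values and continuity *)
  (forall k, xk k (tau0 1%N) = 0) ->
  (forall k, {within `[tau0 1%N, tau2 M], continuous (xk k)}) ->
  (forall j k, j \in Jb ->
     [/\ h j k (tau0 1%N) = h0, w j k (tau0 1%N) = b1 / (b2 * #|Jb|%:R),
         {within `[tau0 1%N, tau2 M], continuous (h j k)} &
         {within `[tau0 1%N, tau2 M], continuous (w j k)}]) ->
  (* learning sub-phase [tau0 m, tau1 m] *)
  (forall m, (1 <= m <= M)%N ->
     [/\ (forall j k t, j \in Jb -> tau0 m <= t <= tau1 m -> w j k t = w j k (tau0 m)),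
         (forall k t, tau0 m < t < tau1 m ->
            is_derive t 1 (xk k) (a1 * \sum_(j in Jb) xj j t * w j k (tau0 m))),
         (forall j t, j \in Jb -> tau0 m < t < tau1 m ->
            is_derive t 1 (h j (kstar m))
              (drate eta kstar M (kstar m) * (xj j t + s0) * h j (kstar m) t)) &
         (forall j k t, j \in Jb -> k != kstar m -> tau0 m < t < tau1 m ->
            is_derive t 1 (h j k)
              (crate eta kstar M (kstar m) * (s0 - xj j t) * h j k t))]) ->
  (* renormalisation sub-phase [tau1 m, tau2 m] *)
  (forall m, (1 <= m <= M)%N ->
     [/\ (forall j k t, j \in Jb -> tau1 m <= t <= tau2 m -> h j k t = h j k (tau1 m)),
         (forall k t, tau1 m < t < tau2 m -> is_derive t 1 (xk k) (- a2 * xk k t)) &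
         (forall j k t, j \in Jb -> tau1 m < t < tau2 m ->
            is_derive t 1 (w j k)
              (b1 * h j k (tau1 m) - b2 * w j k t * \sum_(j' in Jb) h j' k (tau1 m)))]) ->
  C3 <= Tren ->
  forall j k m, j \in Jb -> (1 <= m <= M)%N ->
    `| w j k (tau2 m) - ewa x wsel Jb b1 b2 eta s0 Tsel Tlearn Tren kstar M m.+1 j k |
      <= C4 * expR (- C5 * #|Jb|%:R * Tren)].
Proof.
move=> a0_gt0 _ _ b1_gt0 b2_gt0 s0_gt0 h0_gt0 eta_gt0 theta_gt0 rho_gt0 Tsel_gt0 Tlearn_gt0 _
  margin_gt0 f_cont f_ge0 _ _ f_const.
have [Fm f_le] := continuous_eventually_constant_bounded
  (addr_ge0 (ltW theta_gt0) (ltW rho_gt0)) f_cont f_const.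
have Fm_ge0 : 0 <= Fm := le_trans (f_ge0 0 (lexx 0)) (f_le 0 (lexx 0)).
exists ((Fm * Tsel + 1) / (a0 * b1)), (b1 / b2), (b2 * h0).
split; [|exact: divr_gt0 | exact: mulr_gt0 |].
  by rewrite divr_gt0 ?mulr_gt0 // ltr_wpDl ?mulr_ge0 ?(ltW Tsel_gt0).
move=> I K n M Tren x kstar wsel xk h w Jb tau0 tau1 tau2 xj _ _ _ Tren_gt0 x_ge0 _ x_cont _ _
  flux_le wsel_ode _ _ hw_init learn renorm C3_le j k m jJ mM.
have FmT : Fm * Tsel <= a0 * b1 * Tren.
  rewrite -ler_pdivrMl ?mulr_gt0 //; apply: le_trans C3_le.
  by rewrite mulrC ler_pM2r ?invr_gt0 ?mulr_gt0 // lerDl.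
have W_bounds j' : j' \in Jb -> 0 <= wsel j' (tau0 1%N) <= 2 * (b1 / b2).
  case/wsel_ode=> w0 wc wd wr _; rewrite /tau0 T0_1 in wc wr *.
  apply: selection_weight_bounds FmT w0 wc wd _ wr => // t /andP[/ltW t0 _].
  have P0 : 0 <= Phi x j' t by apply: Phi_ge0 => i; exact: x_ge0.
  by rewrite f_ge0 ?f_le.
apply: (learned_weight_error (h := h) _ _ _ _ _ _ _ _
  x_ge0 x_cont flux_le W_bounds margin_gt0) mM jJ => //.
all: first [ by move=> j' k' /(hw_init j' k')[]
           | by move=> m' /(learn m')[]
           | by move=> m' /(renorm m')[] ].
Qed.
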